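(* Assume Assumption 1 (randomization) and $0<P(Z=1\mid R=r)<1$, without assuming monotonicity. If $P_{01r}>P_{10r}$, then $\pi_{ss,r}>0$ and $$\max\Big\{0,1-\frac{(1-Q_{11r})P_{11r}}{P_{01r}-P_{10r}}\Big\}-\min\Big\{1,\frac{Q_{01r}P_{01r}}{P_{01r}-P_{10r}}\Big\}\ \le\ ACE_{ss,r}\ \le\ \min\Big\{1,\frac{Q_{11r}P_{11r}}{P_{01r}-P_{10r}}\Big\}+\min\Big\{0,\frac{(1-Q_{01r})P_{01r}}{P_{01r}-P_{10r}}-1\Big\}.$$
   Context: A unit has trial $R$, treatment $Z\in\{0,1\}$, binary potential surrogate and endpoint $S(z),Y(z)$; observed $S=ZS(1)+(1-Z)S(0)$, $Y=ZY(1)+(1-Z)Y(0)$. $U=(S(1),S(0))$ with $ss=(1,1)$, $s\bar{s}=(1,0)$, $\bar{s}s=(0,1)$, $\bar{s}\bar{s}=(0,0)$; $\pi_{ur}=P(U=u\mid R=r)$; $ACE_{ur}=E\{Y(1)-Y(0)\mid U=u,R=r\}$. $P_{zsr}=P(S=s\mid Z=z,R=r)$ and $Q_{zsr}=P(Y=1\mid Z=z,S=s,R=r)$. Assumption 1 (randomization): $Z\perp\!\!\!\perp\{S(1),S(0),Y(1),Y(0)\}\mid R$. *)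

From HB Require Import structures.
From mathcomp Require Import all_boot all_order all_algebra.
Set Implicit Arguments. Unset Strict Implicit. Unset Printing Implicit Defensive.
Import Order.TTheory GRing.Theory Num.Theory.
Local Open Scope ring_scope.

(* An outcome of the experiment for one unit:
   (((((R, Z), S(1)), S(0)), Y(1)), Y(0)) with R in a finite set I of trials. *)
Definition outcome (I : finType) : finType :=
  (I * bool * bool * bool * bool * bool)%type.

Definition trial {I : finType} (w : outcome I) : I := w.1.1.1.1.1.
Definition treat {I : finType} (w : outcome I) : bool := w.1.1.1.1.2.
Definition S1 {I : finType} (w : outcome I) : bool := w.1.1.1.2.
Definition S0 {I : finType} (w : outcome I) : bool := w.1.1.2.
Definition Y1 {I : finType} (w : outcome I) : bool := w.1.2.
Definition Y0 {I : finType} (w : outcome I) : bool := w.2.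
Definition Sobs {I : finType} (w : outcome I) : bool := if treat w then S1 w else S0 w.
Definition Yobs {I : finType} (w : outcome I) : bool := if treat w then Y1 w else Y0 w.

Definition is_distr {F : realFieldType} {I : finType} (p : outcome I -> F) : Prop :=
  (forall w, 0 <= p w) /\ \sum_(w : outcome I) p w = 1.

Definition Prob {F : realFieldType} {I : finType} (p : outcome I -> F)
  (A : pred (outcome I)) : F := \sum_(w | A w) p w.

(* P(A | B)  (conventionally 0 when P(B) = 0) *)
Definition CondP {F : realFieldType} {I : finType} (p : outcome I -> F)
  (A B : pred (outcome I)) : F :=
  Prob p (fun w => A w && B w) / Prob p B.

Definition CondE {F : realFieldType} {I : finType} (p : outcome I -> F)
  (f : outcome I -> F) (B : pred (outcome I)) : F :=
  (\sum_(w | B w) p w * f w) / Prob p B.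

Definition randomization {F : realFieldType} {I : finType} (p : outcome I -> F) : Prop :=
  forall (r : I) (z a b c d : bool),
    CondP p (fun w => (treat w == z) && [&& S1 w == a, S0 w == b, Y1 w == c & Y0 w == d])
            (fun w => trial w == r)
    = CondP p (fun w => treat w == z) (fun w => trial w == r)
      * CondP p (fun w => [&& S1 w == a, S0 w == b, Y1 w == c & Y0 w == d])
                (fun w => trial w == r).

Definition pi_ss {F : realFieldType} {I : finType} (p : outcome I -> F) (r : I) : F :=
  CondP p (fun w => S1 w && S0 w) (fun w => trial w == r).

Definition ACE_ss {F : realFieldType} {I : finType} (p : outcome I -> F) (r : I) : F :=
  CondE p (fun w => (Y1 w)%:R - (Y0 w)%:R) (fun w => [&& S1 w, S0 w & trial w == r]).

Definition Pzsr {F : realFieldType} {I : finType} (p : outcome I -> F)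
  (z s : bool) (r : I) : F :=
  CondP p (fun w => Sobs w == s) (fun w => (treat w == z) && (trial w == r)).

Definition Qzsr {F : realFieldType} {I : finType} (p : outcome I -> F)
  (z s : bool) (r : I) : F :=
  CondP p (fun w => Yobs w)
          (fun w => [&& treat w == z, Sobs w == s & trial w == r]).

From HB Require Import structures.
From mathcomp Require Import all_boot all_order all_algebra ring lra.
Set Implicit Arguments. Unset Strict Implicit. Unset Printing Implicit Defensive.
Import Order.TTheory GRing.Theory Num.Theory.
Local Open Scope ring_scope.

(* Under randomization, conditioning on the arm Z = z does not change the law of the
   potential outcomes, so P_{zsr} = P(S(z) = s | R = r) and
   Q_{zsr} P_{zsr} = P(S(z) = s, Y(z) = 1 | R = r).  Hence
   P_{01r} - P_{10r} = pi_{ss,r} - pi_{s's',r} <= pi_{ss,r}, and since the stratum ss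
   lies inside {S(z) = 1}, the mass of Y(z) = 1 (resp. Y(z) = 0) on ss is at most
   Q_{z1r} P_{z1r} (resp. (1 - Q_{z1r}) P_{z1r}).  Dividing by pi_{ss,r}, or by the
   smaller positive number P_{01r} - P_{10r}, bounds E[Y(z) | ss, r] for each arm, and
   ACE_{ss,r} is the difference of the two means. *)

Lemma divf_cancel (F : fieldType) (m x y : F) : m != 0 -> (x / m) / (y / m) = x / y.
Proof. by move=> m_neq0; rewrite invf_div mulrA divfK. Qed.

(* For y = 0 this relies on the convention 0^-1 = 0. *)
Lemma mulf_div_dominated (F : realFieldType) (x y : F) : 0 <= x <= y -> x / y * y = x.
Proof.
case/andP=> x_ge0 x_le_y; have [y0|y_neq0] := eqVneq y 0; last by rewrite divfK.
by apply/eqP; rewrite y0 mulr0 eq_le x_ge0 -y0 x_le_y.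
Qed.

Lemma ratio_bounds (F : realFieldType) (d pi x u v : F) :
  0 < d -> d <= pi -> 0 <= x <= pi -> x <= u -> pi - x <= v ->
  Num.max 0 (1 - v / d) <= x / pi <= Num.min 1 (u / d).
Proof.
move=> d_gt0 d_le_pi /andP[x_ge0 x_le_pi] x_le_u pix_le_v.
have pi_gt0 : 0 < pi := lt_le_trans d_gt0 d_le_pi.
have inv_le : pi^-1 <= d^-1 by rewrite lef_pV2 ?posrE.
have div_le y w : 0 <= y -> y <= w -> y / pi <= w / d.
  move=> y_ge0 y_le_w; apply: le_trans (ler_wpM2l y_ge0 inv_le) _.
  by rewrite ler_wpM2r // invr_ge0 ltW.
have : (pi - x) / pi <= v / d by apply: div_le; rewrite ?subr_ge0.
rewrite mulrBl divff ?gt_eqF // => lo.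
have x_pi_ge0 : 0 <= x / pi by rewrite divr_ge0 // ltW.
have x_pi_le1 : x / pi <= 1 by rewrite ler_pdivrMr // mul1r.
rewrite ge_max le_min x_pi_ge0 x_pi_le1 div_le //= andbT; lra.
Qed.

Section Conditioning.
Context {F : realFieldType} {I : finType} {p : outcome I -> F}.
Implicit Types A B C : pred (outcome I).

Lemma Prob_ext A B : A =1 B -> Prob p A = Prob p B.
Proof. exact: eq_bigl. Qed.

Lemma CondP_ext A A' C C' : A =1 A' -> C =1 C' -> CondP p A C = CondP p A' C'.
Proof.
by move=> eA eC; rewrite /CondP (Prob_ext eC); congr (_ / _); apply: Prob_ext => w; rewrite eA eC.
Qed.

Lemma CondP_ext_on A A' C : (forall w, C w -> A w = A' w) -> CondP p A C = CondP p A' C.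
Proof.
move=> eA; rewrite /CondP; congr (_ / _); apply: Prob_ext => w.
by case Cw: (C w); rewrite ?andbF ?andbT ?eA.
Qed.

Lemma sum_mul_indicator B (f : outcome I -> bool) :
  \sum_(w | B w) p w * (f w)%:R = Prob p (fun w => B w && f w).
Proof. by rewrite /Prob big_mkcondr; apply: eq_bigr => w _; case: (f w); rewrite ?mulr1 ?mulr0. Qed.

Lemma CondP_pred0 A C : A =1 xpred0 -> CondP p A C = 0.
Proof. by move=> A0; rewrite /CondP /Prob big_pred0 ?mul0r // => w; rewrite A0. Qed.

Lemma CondP_split A B C :
  CondP p A C = CondP p (fun w => A w && B w) C + CondP p (fun w => A w && ~~ B w) C.
Proof.
rewrite /CondP -mulrDl /Prob (bigID B) /=.
by congr ((_ + _) / _); apply: eq_bigl => w; rewrite andbAC.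
Qed.

Lemma CondP_partition (T : finType) (f : outcome I -> T) A C :
  CondP p A C = \sum_(k : T) CondP p (fun w => A w && (f w == k)) C.
Proof.
rewrite /CondP -mulr_suml /Prob (partition_big f xpredT) //.
by congr (_ * _); apply: eq_bigr => k _; apply: eq_bigl => w; rewrite andbAC.
Qed.

Lemma CondP_chain A B C : Prob p C != 0 ->
  CondP p A (fun w => B w && C w) = CondP p (fun w => A w && B w) C / CondP p B C.
Proof.
move=> C_neq0; rewrite /CondP divf_cancel //; congr (_ / _).
by apply: Prob_ext => w; rewrite andbA.
Qed.

Lemma CondPC A C : Prob p C != 0 ->
  CondP p (fun w => ~~ A w) C = 1 - CondP p A C.
Proof.
move=> C_neq0; rewrite -[1](divff C_neq0) /CondP -mulrBl; congr (_ * _).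
rewrite /Prob [in RHS](bigID A) /= addrC (eq_bigl _ _ (fun w => andbC (C w) (A w))).
by rewrite addrK; apply: eq_bigl => w; rewrite andbC.
Qed.

Lemma Prob_neq0_CondP_gt0 A C : 0 < CondP p A C -> Prob p C != 0.
Proof. by apply: contraTneq; rewrite /CondP => ->; rewrite invr0 mulr0 ltxx. Qed.

Hypothesis p_ge0 : forall w, 0 <= p w.

Lemma Prob_ge0 A : 0 <= Prob p A.
Proof. exact: sumr_ge0. Qed.

Lemma CondP_ge0 A C : 0 <= CondP p A C.
Proof. by rewrite divr_ge0 ?Prob_ge0. Qed.

Lemma Prob_le A B : (forall w, A w -> B w) -> Prob p A <= Prob p B.
Proof.
move=> AB; rewrite /Prob [leRHS](bigID A) /= [X in _ <= X + _](eq_bigl A) ?lerDl ?sumr_ge0 // => w.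
by case Aw: (A w); rewrite ?andbT ?andbF ?AB.
Qed.

Lemma CondP_le A B C : (forall w, A w -> B w) -> CondP p A C <= CondP p B C.
Proof.
by move=> AB; rewrite ler_wpM2r ?invr_ge0 ?Prob_ge0 // Prob_le // => w /andP[/AB-> ->].
Qed.

Lemma CondP_le_diff A A' B C : (forall w, A w -> A' w) ->
  CondP p A C - CondP p (fun w => A w && B w) C
  <= CondP p A' C - CondP p (fun w => A' w && B w) C.
Proof.
move=> AA'; rewrite (CondP_split A B) (CondP_split A' B).
have : CondP p (fun w => A w && ~~ B w) C <= CondP p (fun w => A' w && ~~ B w) C.
  by apply: CondP_le => w /andP[/AA' -> ->].
lra.
Qed.

End Conditioning.

Definition potential {I : finType} (w : outcome I) : bool * bool * bool * bool :=
  (S1 w, S0 w, Y1 w, Y0 w).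

Definition potential_event {I : finType} (E : pred (outcome I)) : Prop :=
  forall w w', potential w = potential w' -> E w = E w'.

(* The potential outcomes S(z) and Y(z); note that [Sobs w] is [Spot (treat w) w]. *)
Definition Spot {I : finType} (z : bool) (w : outcome I) : bool := if z then S1 w else S0 w.
Definition Ypot {I : finType} (z : bool) (w : outcome I) : bool := if z then Y1 w else Y0 w.

Lemma Spot_event {I : finType} z s : potential_event (fun w : outcome I => Spot z w == s).
Proof. by move=> w w' [e1 e0 _ _]; rewrite /Spot e1 e0. Qed.

Lemma Spot_Ypot_event {I : finType} z s :
  potential_event (fun w : outcome I => (Spot z w == s) && Ypot z w).
Proof. by move=> w w' [e1 e0 f1 f0]; rewrite /Spot /Ypot e1 e0 f1 f0. Qed.

Section Stratum_bounds.
Context {F : realFieldType} {I : finType} {p : outcome I -> F}.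
Hypothesis p_ge0 : forall w, 0 <= p w.
Variable C : pred (outcome I).

Lemma Spot_diff_le_always_survivor :
  CondP p (fun w => Spot false w == true) C - CondP p (fun w => Spot true w == false) C
  <= CondP p (fun w => S1 w && S0 w) C.
Proof.
rewrite (CondP_split _ S1).
have : CondP p (fun w => (Spot false w == true) && S1 w) C <= CondP p (fun w => S1 w && S0 w) C.
  by apply: CondP_le => // w; rewrite /Spot; case: (S1 w) (S0 w) => [] [].
have : CondP p (fun w => (Spot false w == true) && ~~ S1 w) C
       <= CondP p (fun w => Spot true w == false) C.
  by apply: CondP_le => // w; rewrite /Spot; case: (S1 w) (S0 w) => [] [].
lra.
Qed.

Lemma always_survivor_ratio_bounds z d :
  0 < d -> d <= CondP p (fun w => S1 w && S0 w) C ->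
  Num.max 0 (1 - (CondP p (fun w => Spot z w == true) C
                  - CondP p (fun w => (Spot z w == true) && Ypot z w) C) / d)
  <= CondP p (fun w => (S1 w && S0 w) && Ypot z w) C / CondP p (fun w => S1 w && S0 w) C
  <= Num.min 1 (CondP p (fun w => (Spot z w == true) && Ypot z w) C / d).
Proof.
have ss_Spot (w : outcome I) : S1 w && S0 w -> Spot z w == true.
  by case/andP=> s1 s0; rewrite /Spot; case: z; rewrite ?s1 ?s0.
move=> d_gt0 d_le_pi; apply: ratio_bounds => //.
- by rewrite CondP_ge0 //= CondP_le // => w /andP[].
- by apply: CondP_le => // w /andP[/ss_Spot -> ->].
- exact: CondP_le_diff.
Qed.

End Stratum_bounds.

Section Randomization.
Variables (F : realFieldType) (I : finType) (p : outcome I -> F) (r : I).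
Hypotheses (p_ge0 : forall w, 0 <= p w) (rand : randomization p).
Hypothesis trial_neq0 : Prob p (fun w => trial w == r) != 0.
Local Notation condR A := (CondP p A (fun w => trial w == r)).

Lemma treat_atom z k :
  condR (fun w => (treat w == z) && (potential w == k))
  = condR (fun w => treat w == z) * condR (fun w => potential w == k).
Proof.
case: k => [[[a b] c] d].
have atomE (E : pred (outcome I)) :
    (fun w => E w && (potential w == (a, b, c, d)))
    =1 (fun w => E w && [&& S1 w == a, S0 w == b, Y1 w == c & Y0 w == d]).
  by move=> w; rewrite /potential !xpair_eqE -!andbA.
rewrite (CondP_ext (atomE _) (frefl _)) (CondP_ext (atomE xpredT) (frefl _)).
exact: rand.
Qed.

(* A representative of the atom {potential w = k}, on which every potential event is constant. *)
Let atom (k : bool * bool * bool * bool) : outcome I :=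
  let: (a, b, c, d) := k in (r, false, a, b, c, d).

Lemma CondP_potential_atom B E k : potential_event E ->
  condR (fun w => (B w && E w) && (potential w == k))
  = if E (atom k) then condR (fun w => B w && (potential w == k)) else 0.
Proof.
move=> E_pot; have Ek w : potential w == k -> E w = E (atom k).
  by move/eqP=> wk; apply: E_pot; rewrite wk; case: k {wk} => [[[]]].
case: ifP => Ek_true.
  apply: CondP_ext => // w; case: (boolP (potential w == k)) => [/Ek->|_].
    by rewrite Ek_true !andbT.
  by rewrite !andbF.
apply: CondP_pred0 => w; case: (boolP (potential w == k)) => [/Ek->|_].
  by rewrite Ek_true andbF.
by rewrite andbF.
Qed.

Lemma treat_indep z E : potential_event E ->
  condR (fun w => (treat w == z) && E w) = condR (fun w => treat w == z) * condR E.
Proof.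
move=> E_pot; rewrite (CondP_partition potential) [condR E](CondP_partition potential).
rewrite mulr_sumr; apply: eq_bigr => k _.
rewrite (CondP_potential_atom (fun w => treat w == z)) //.
rewrite (CondP_potential_atom xpredT (E := E)) //.
by case: ifP; rewrite ?mulr0 // treat_atom.
Qed.

Lemma ACE_ss_ratio :
  ACE_ss p r = condR (fun w => (S1 w && S0 w) && Ypot true w) / condR (fun w => S1 w && S0 w)
               - condR (fun w => (S1 w && S0 w) && Ypot false w) / condR (fun w => S1 w && S0 w).
Proof.
rewrite /ACE_ss /CondE -mulrBl /CondP -mulrBl divf_cancel //.
under eq_bigr do rewrite mulrBr.
rewrite sumrB !sum_mul_indicator.
by congr ((_ - _) / _); apply: Prob_ext => w; rewrite !andbA // andbAC.
Qed.

Variables (z : bool) (arm_neq0 : condR (fun w => treat w == z) != 0).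

Lemma CondP_treat_indep E : potential_event E ->
  CondP p E (fun w => (treat w == z) && (trial w == r)) = condR E.
Proof.
move=> E_pot; rewrite CondP_chain //.
rewrite (CondP_ext (A' := fun w => (treat w == z) && E w) _ (frefl _));
  last by move=> w; rewrite andbC.
by rewrite treat_indep // mulrC mulKf.
Qed.

Lemma Pzsr_potential s : Pzsr p z s r = condR (fun w => Spot z w == s).
Proof.
rewrite /Pzsr (CondP_ext_on (A' := fun w => Spot z w == s)).
  exact: CondP_treat_indep (Spot_event z s).
by move=> w /andP[/eqP <- _].
Qed.

Lemma Qzsr_Pzsr_potential s :
  Qzsr p z s r * Pzsr p z s r = condR (fun w => (Spot z w == s) && Ypot z w).
Proof.
have armR_neq0 : Prob p (fun w => (treat w == z) && (trial w == r)) != 0.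
  by apply: contraNneq arm_neq0; rewrite /CondP => ->; rewrite mul0r.
rewrite Pzsr_potential /Qzsr.
rewrite (CondP_ext (A := Yobs)
  (C' := fun w => (Spot z w == s) && ((treat w == z) && (trial w == r))) (frefl _));
  last first.
  by move=> w; rewrite /Sobs /Spot; case: (treat w) z => [] []; rewrite /= ?andbF // andbCA.
rewrite (CondP_ext_on (A' := Ypot z)); last by move=> w /and3P[_ /eqP <- _].
rewrite CondP_chain // (CondP_ext (A' := fun w => (Spot z w == s) && Ypot z w) _ (frefl _));
  last by move=> w; rewrite andbC.
rewrite (CondP_treat_indep (Spot_Ypot_event z s)) (CondP_treat_indep (Spot_event z s)).
rewrite mulf_div_dominated // CondP_ge0 //=.
by apply: CondP_le => // w /andP[].
Qed.

End Randomization.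

Lemma CondP_arm_neq0 (F : realFieldType) (I : finType) (p : outcome I -> F) (r : I) :
  0 < CondP p (fun w => treat w) (fun w => trial w == r) ->
  CondP p (fun w => treat w) (fun w => trial w == r) < 1 ->
  forall z, CondP p (fun w => treat w == z) (fun w => trial w == r) != 0.
Proof.
move=> treated_gt0 treated_lt1.
have treatedE : CondP p (fun w => treat w == true) (fun w => trial w == r)
                = CondP p (fun w => treat w) (fun w => trial w == r).
  by apply: CondP_ext => // w; rewrite eqb_id.
case; first by rewrite treatedE gt_eqF.
rewrite (CondP_ext (A' := fun w => ~~ (treat w == true)) _ (frefl _));
  last by move=> w; case: (treat w).
by rewrite CondPC ?(Prob_neq0_CondP_gt0 treated_gt0) // treatedE subr_eq0 eq_sym lt_eqF.
Qed.

Theorem propositionA1 (F : realFieldType) (I : finType) (p : outcome I -> F) (r : I) :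
  is_distr p ->
  randomization p ->
  0 < CondP p (fun w => treat w) (fun w => trial w == r) < 1 ->
  Pzsr p true false r < Pzsr p false true r ->
  let d := Pzsr p false true r - Pzsr p true false r in
  0 < pi_ss p r /\
  Num.max 0 (1 - (1 - Qzsr p true true r) * Pzsr p true true r / d)
    - Num.min 1 (Qzsr p false true r * Pzsr p false true r / d)
  <= ACE_ss p r
  <= Num.min 1 (Qzsr p true true r * Pzsr p true true r / d)
    + Num.min 0 ((1 - Qzsr p false true r) * Pzsr p false true r / d - 1).
Proof.
move=> [p_ge0 _] rand /andP[treated_gt0 treated_lt1] lt_P d.
have trial_neq0 := Prob_neq0_CondP_gt0 treated_gt0.
have arm_neq0 := CondP_arm_neq0 treated_gt0 treated_lt1.
have d_gt0 : 0 < d by rewrite subr_gt0.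
rewrite /d !Pzsr_potential // in d_gt0.
rewrite /d !(mulrBl _ 1) !mul1r !Qzsr_Pzsr_potential // !Pzsr_potential // ACE_ss_ratio //.
have d_le_pi := Spot_diff_le_always_survivor p_ge0 (fun w => trial w == r).
have [lo1 hi1] := andP (always_survivor_ratio_bounds p_ge0 true d_gt0 d_le_pi).
have [lo0 hi0] := andP (always_survivor_ratio_bounds p_ge0 false d_gt0 d_le_pi).
split; first exact: lt_le_trans d_gt0 d_le_pi.
have min0E (t : F) : Num.min 0 (t - 1) = - Num.max 0 (1 - t).
  by rewrite oppr_max oppr0 opprB.
rewrite min0E.
apply/andP; split; lra.
Qed.
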